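(* Let $\Bbbk$ be a field, $H$ a Hopf $\Bbbk$-algebra with bijective antipode, and $A$ a left $H$-module $\Bbbk$-algebra. Equip $\operatorname{Spec} A$ with the Jacobson-Zariski topology and $H\text{-}\operatorname{Spec} A$ with the topology whose closed sets are $V_H(S)=\{Q\in H\text{-}\operatorname{Spec} A \mid Q\supseteq S\}$, $S\subseteq A$. Let $\kappa_H\colon \operatorname{Spec} A\to H\text{-}\operatorname{Spec} A$, $P\mapsto P\!:\!H$. Then: (a) $\kappa_H$ is continuous. (b) If all $H$-prime ideals of $A$ are prime, then the topology of $H\text{-}\operatorname{Spec} A$ is the initial (subspace) topology for the inclusion map $H\text{-}\operatorname{Spec} A \hookrightarrow \operatorname{Spec} A$. (c) If $\kappa_H$ is surjective and $\bigcap \operatorname{Spec}_I A = I$ for all $I \in H\text{-}\operatorname{Spec} A$, where $\operatorname{Spec}_I A=\kappa_H^{-1}(I)$, then the topology of $H\text{-}\operatorname{Spec} A$ is the final (quotient) topology for $\kappa_H$.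
   Context: A left $H$-module algebra is a $\Bbbk$-algebra $A$ with $1$ that is a left $H$-module via $h\otimes a\mapsto h.a$ such that $h.(ab)=(h_1.a)(h_2.b)$ and $h.1=\varepsilon(h)1$. An $H$-ideal is a two-sided ideal which is an $H$-submodule; an $H$-ideal $I$ is $H$-prime if $A/I\ne0$ and the product of any two nonzero $H$-ideals of $A/I$ is nonzero. $H\text{-}\operatorname{Spec} A$ is the set of $H$-prime ideals of $A$. For an ideal $P$, $P\!:\!H=\{a\in A\mid H.a\subseteq P\}$, the largest $H$-ideal contained in $P$; if $P$ is prime then $P\!:\!H$ is $H$-prime. The Jacobson-Zariski topology on $\operatorname{Spec} A$ has closed sets $V(S)=\{P\in\operatorname{Spec} A\mid P\supseteq S\}$. *)

From HB Require Import structures.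
From mathcomp Require Import all_boot all_order all_algebra.
From mathcomp Require Import boolp classical_sets.
Set Implicit Arguments. Unset Strict Implicit. Unset Printing Implicit Defensive.
Import GRing.Theory.
Local Open Scope ring_scope.
Local Open Scope classical_set_scope.

(* Tensor products.  MathComp has no tensor product of vector spaces.  An    *)
(* element of H (x) H is represented by a finite list of pairs (sum of pure  *)
(* tensors), and an element of H (x) H (x) H by a list of triples.  Two      *)
(* representatives are equal in the tensor product iff every bilinear       *)
(* (resp. trilinear) form takes the same value on them (over a field the    *)
(* dual of H (x) H = bilinear forms separates points).                       *)

Definition bilinear_form (k : fieldType) (H : lmodType k) (f : H -> H -> k) :=
  (forall y c x x', f (c *: x + x') y = c * f x y + f x' y) /\
  (forall x c y y', f x (c *: y + y') = c * f x y + f x y').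

Definition trilinear_form (k : fieldType) (H : lmodType k) (f : H -> H -> H -> k) :=
  [/\ (forall y z c x x', f (c *: x + x') y z = c * f x y z + f x' y z),
      (forall x z c y y', f x (c *: y + y') z = c * f x y z + f x y' z) &
      (forall x y c z z', f x y (c *: z + z') = c * f x y z + f x y z')].

Definition teq2 (k : fieldType) (H : lmodType k) (s t : seq (H * H)) :=
  forall f : H -> H -> k, bilinear_form f ->
    \sum_(p <- s) f p.1 p.2 = \sum_(p <- t) f p.1 p.2.

Definition teq3 (k : fieldType) (H : lmodType k) (s t : seq (H * H * H)) :=
  forall f : H -> H -> H -> k, trilinear_form f ->
    \sum_(p <- s) f p.1.1 p.1.2 p.2 = \sum_(p <- t) f p.1.1 p.1.2 p.2.

(* Delta h is a representative of Delta(h) = sum h_1 (x) h_2.               *)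
Record hopf_algebra (k : fieldType) (H : algType k)
    (Delta : H -> seq (H * H)) (eps : H -> k) (S : H -> H) : Prop := {
  hopf_Delta_lin : forall c h g,
    teq2 (Delta (c *: h + g)) ([seq (c *: p.1, p.2) | p <- Delta h] ++ Delta g);
  (* coassociativity: (Delta (x) id) Delta = (id (x) Delta) Delta *)
  hopf_coassoc : forall h,
    teq3 [seq (q.1, q.2, p.2) | p <- Delta h, q <- Delta p.1]
         [seq (p.1, q.1, q.2) | p <- Delta h, q <- Delta p.2];
  hopf_eps_lin : forall c h g, eps (c *: h + g) = c * eps h + eps g;
  hopf_counitl : forall h, \sum_(p <- Delta h) eps p.1 *: p.2 = h;
  hopf_counitr : forall h, \sum_(p <- Delta h) eps p.2 *: p.1 = h;
  hopf_Delta_mul : forall h g,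
    teq2 (Delta (h * g)) [seq (p.1 * q.1, p.2 * q.2) | p <- Delta h, q <- Delta g];
  hopf_Delta_1 : teq2 (Delta 1) [:: (1, 1)];
  hopf_eps_mul : forall h g, eps (h * g) = eps h * eps g;
  hopf_eps_1 : eps 1 = 1;
  hopf_S_lin : forall c h g, S (c *: h + g) = c *: S h + S g;
  hopf_antipodel : forall h, \sum_(p <- Delta h) S p.1 * p.2 = (eps h)%:A;
  hopf_antipoder : forall h, \sum_(p <- Delta h) p.1 * S p.2 = (eps h)%:A
}.

Record module_algebra (k : fieldType) (H : algType k)
    (Delta : H -> seq (H * H)) (eps : H -> k) (A : algType k)
    (act : H -> A -> A) : Prop := {
  ma_lin_l : forall c h g a, act (c *: h + g) a = c *: act h a + act g a;
  ma_lin_r : forall c h a b, act h (c *: a + b) = c *: act h a + act h b;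
  ma_mul : forall h g a, act (h * g) a = act h (act g a);
  ma_one : forall a, act 1 a = a;
  ma_act_mul : forall h a b, act h (a * b) = \sum_(p <- Delta h) act p.1 a * act p.2 b;
  ma_act_1 : forall h, act h 1 = (eps h)%:A
}.

Definition ideal (R : pzRingType) (I : set R) :=
  [/\ I 0, (forall x y, I x -> I y -> I (x + y)),
      (forall a x, I x -> I (a * x)) & (forall a x, I x -> I (x * a))].

(* (the additive span of) J K is contained in I *)
Definition prod_sub (R : pzRingType) (J K I : set R) :=
  forall a b, J a -> K b -> I (a * b).

Definition prime_ideal (R : pzRingType) (P : set R) :=
  [/\ ideal P, ~ P 1 &
      forall I J, ideal I -> ideal J -> prod_sub I J P -> I `<=` P \/ J `<=` P].

Definition Spec (R : pzRingType) : set (set R) := [set P | prime_ideal P].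

Definition H_ideal (k : fieldType) (H : algType k) (A : algType k)
    (act : H -> A -> A) (I : set A) :=
  ideal I /\ forall h a, I a -> I (act h a).

(* I is H-prime: A/I <> 0 and the product of two nonzero H-ideals of A/I is  *)
(* nonzero; H-ideals of A/I are J/I for H-ideals J of A containing I.       *)
Definition H_prime (k : fieldType) (H : algType k) (A : algType k)
    (act : H -> A -> A) (I : set A) :=
  [/\ H_ideal act I, ~ I 1 &
      forall J K, H_ideal act J -> H_ideal act K -> I `<=` J -> I `<=` K ->
        prod_sub J K I -> J `<=` I \/ K `<=` I].

Definition HSpec (k : fieldType) (H : algType k) (A : algType k)
    (act : H -> A -> A) : set (set A) := [set I | H_prime act I].

Definition colonH (k : fieldType) (H : algType k) (A : algType k)
    (act : H -> A -> A) (P : set A) : set A :=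
  [set a | forall h, P (act h a)].

Definition VSpec (R : pzRingType) (S : set R) : set (set R) :=
  [set P | Spec P /\ S `<=` P].
Definition closed_Spec (R : pzRingType) (X : set (set R)) :=
  exists S : set R, X = VSpec S.

Definition VH (k : fieldType) (H : algType k) (A : algType k)
    (act : H -> A -> A) (S : set A) : set (set A) :=
  [set Q | HSpec act Q /\ S `<=` Q].
Definition closed_HSpec (k : fieldType) (H : algType k) (A : algType k)
    (act : H -> A -> A) (Y : set (set A)) :=
  exists S : set A, Y = VH act S.

Definition kappa_preim (k : fieldType) (H : algType k) (A : algType k)
    (act : H -> A -> A) (Y : set (set A)) : set (set A) :=
  [set P | Spec P /\ Y (colonH act P)].

From HB Require Import structures.
From mathcomp Require Import all_boot all_order all_algebra.
From mathcomp Require Import boolp classical_sets.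
Local Open Scope ring_scope.
Local Open Scope classical_set_scope.
Set Implicit Arguments. Unset Strict Implicit. Unset Printing Implicit Defensive.
Import GRing.Theory.

(* For a prime P, P:H is an H-ideal contained in P, and it is H-prime because
   a product of H-ideals lying in P:H lies in P.  Since S is contained in P:H
   exactly when H.S is contained in P, the preimage of V_H(S) under kappa_H is
   V(H.S), which gives (a).  When every H-prime is prime, V_H(S) is just
   V(S) restricted to H-Spec A, which gives (b).  For (c), if the preimage of
   Y is V(T), then every I in Y is the intersection of its fibre, which lies in
   V(T), so I contains T; conversely, by surjectivity an H-prime I containing T
   is P:H for a prime P containing T, so P lies in V(T) and I lies in Y. *)

Definition H_orbit (k : fieldType) (H : algType k) (A : algType k)
    (act : H -> A -> A) (T : set A) : set A :=
  [set x | exists h, exists2 t, T t & x = act h t].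

Lemma sub_colonH (k : fieldType) (H : algType k) (A : algType k)
    (act : H -> A -> A) (T P : set A) :
  T `<=` colonH act P <-> H_orbit act T `<=` P.
Proof.
split=> [TP _ [h [t Tt ->]] | HTP t Tt h]; first exact: TP.
by apply: HTP; exists h, t.
Qed.

Section ColonH.
Variables (k : fieldType) (H : algType k) (Delta : H -> seq (H * H)) (eps : H -> k).
Variables (A : algType k) (act : H -> A -> A).
Hypothesis MA : module_algebra Delta eps act.

Lemma act_add h a b : act h (a + b) = act h a + act h b.
Proof. by have := ma_lin_r MA 1 h a b; rewrite !scale1r. Qed.

Lemma act0 h : act h 0 = 0.
Proof. by have := ma_lin_r MA (-1) h 0 0; rewrite !scaleN1r !addNr. Qed.

Lemma colonH_sub (P : set A) : colonH act P `<=` P.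
Proof. by move=> a /(_ 1); rewrite (ma_one MA). Qed.

Lemma colonH_H_ideal (P : set A) : ideal P -> H_ideal act (colonH act P).
Proof.
case=> P0 PD PL PR; split; first split.
- by move=> h; rewrite act0.
- by move=> x y Px Py h; rewrite act_add; apply: PD.
- move=> a x Px h; rewrite (ma_act_mul MA).
  by apply: (big_ind P) => // i _; apply: PL.
- move=> a x Px h; rewrite (ma_act_mul MA).
  by apply: (big_ind P) => // i _; apply: PR.
- by move=> h a Pa g; rewrite -(ma_mul MA).
Qed.

Lemma colonH_HSpec (P : set A) : Spec P -> HSpec act (colonH act P).
Proof.
case=> idP P1 primeP; split; first exact: colonH_H_ideal.
  by move/colonH_sub.
move=> J K [idJ HJ] [idK HK] _ _ JK.
have JKP : prod_sub J K P by move=> a b Ja Kb; apply: colonH_sub; exact: JK.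
case: (primeP J K idJ idK JKP) => [JP|KP]; [left|right] => x ? h.
- by apply/JP/HJ.
- by apply/KP/HK.
Qed.

Lemma kappa_preim_VH (T : set A) :
  kappa_preim act (VH act T) = VSpec (H_orbit act T).
Proof.
rewrite eqEsubset; split=> P [SP].
- by case=> _ /sub_colonH.
- by move/sub_colonH => TP; split=> //; split=> //; apply: colonH_HSpec.
Qed.

End ColonH.

Lemma VH_eq_VSpecI (k : fieldType) (H : algType k) (A : algType k)
    (act : H -> A -> A) (T : set A) :
  (forall I : set A, HSpec act I -> Spec I) ->
  VH act T = VSpec T `&` HSpec act.
Proof.
move=> HSpec_Spec; rewrite eqEsubset; split=> Q.
- by case=> HQ TQ; split=> //; split=> //; apply: HSpec_Spec.
- by case=> [[_ TQ] HQ].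
Qed.

Lemma VH_of_kappa_preim (k : fieldType) (H : algType k)
    (Delta : H -> seq (H * H)) (eps : H -> k)
    (A : algType k) (act : H -> A -> A) (Y : set (set A)) (T : set A) :
  module_algebra Delta eps act ->
  (forall I : set A, HSpec act I -> exists P : set A, Spec P /\ colonH act P = I) ->
  (forall I : set A, HSpec act I -> \bigcap_(P in kappa_preim act [set I]) P = I) ->
  Y `<=` HSpec act -> kappa_preim act Y = VSpec T -> Y = VH act T.
Proof.
move=> MA surj fibre_cap YH preimY; rewrite eqEsubset; split=> I.
- move=> YI; split; first exact: YH.
  rewrite -(fibre_cap I (YH I YI)) => t Tt P [SP PI].
  have : kappa_preim act Y P by split=> //; rewrite PI.
  by rewrite preimY => -[_]; apply.
- case=> HI TI; have [P [SP PI]] := surj I HI.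
  have : VSpec T P by split=> // t /TI; rewrite -PI => /(colonH_sub MA).
  by rewrite -preimY => -[_]; rewrite PI.
Qed.

Theorem lemma4p1 (k : fieldType) (H : algType k)
    (Delta : H -> seq (H * H)) (eps : H -> k) (S : H -> H)
    (A : algType k) (act : H -> A -> A) :
  hopf_algebra Delta eps S -> bijective S -> module_algebra Delta eps act ->
  (* (a) kappa_H is continuous *)
  (forall Y : set (set A), closed_HSpec act Y -> closed_Spec (kappa_preim act Y))
  /\
  (* (b) if all H-primes are prime, H-Spec A carries the subspace topology *)
  ((forall I : set A, HSpec act I -> Spec I) ->
   forall Y : set (set A), Y `<=` HSpec act ->
     (closed_HSpec act Y <->
      exists X : set (set A), closed_Spec X /\ Y = X `&` HSpec act))
  /\
  (* (c) if kappa_H is surjective and each I is the intersection of Spec_I A,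
         H-Spec A carries the quotient topology for kappa_H *)
  ((forall I : set A, HSpec act I -> exists P : set A, Spec P /\ colonH act P = I) ->
   (forall I : set A, HSpec act I ->
      \bigcap_(P in kappa_preim act [set I]) P = I) ->
   forall Y : set (set A), Y `<=` HSpec act ->
     (closed_HSpec act Y <-> closed_Spec (kappa_preim act Y))).
Proof.
move=> _ _ MA.
have continuous_kappa Y : closed_HSpec act Y -> closed_Spec (kappa_preim act Y).
  by case=> T ->; exists (H_orbit act T); exact: (kappa_preim_VH MA).
split=> //; split.
  move=> HSpec_Spec Y _; split.
  - case=> T ->; exists (VSpec T); split; first by exists T.
    exact: VH_eq_VSpecI.
  - by case=> _ [[T ->] ->]; exists T; rewrite VH_eq_VSpecI.
move=> surj fibre_cap Y YH; split; first exact: continuous_kappa.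
by case=> T preimY; exists T; exact: (VH_of_kappa_preim MA surj fibre_cap YH preimY).
Qed.
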